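(* Let $R>0$ and $s\in\{-R,\,iR\}$. Then the Voiculescu transform of $a^{1/2}_s$ is $\phi_{a^{1/2}_s}(z)=2isz^{1/2}-s^2$; consequently $a^{1/2}_{-R}$ and $a^{1/2}_{iR}$ are freely $\tfrac12$-stable but not strictly freely stable.
   Context: For $w\in\mathbb{C}\setminus[0,\infty)$ and $p\in\{\alpha,1/\alpha\}$, $w^p:=e^{p\log_{(1)}w}$ with $\operatorname{Im}\log_{(1)}w\in(0,2\pi)$; $(-1)^{\alpha-1}:=e^{i(\alpha-1)\pi}$. For $0<\alpha\le1$ and $(1-\alpha)\pi\le\arg s\le\pi$, the monotone $\alpha$-stable law $a^\alpha_s$ is the probability measure on $\mathbb{R}$ with reciprocal Cauchy transform $F_{a^\alpha_s}(z)=1/\int\frac{a^\alpha_s(dx)}{z-x}=(z^\alpha+(-1)^{\alpha-1}s)^{1/\alpha}$ on $\mathbb{C}_+$ (so $F_{a^{1/2}_s}(z)=(z^{1/2}-is)^2$). For a probability measure $\mu$, $F_\mu=1/G_\mu$ is univalent on a truncated cone $\Gamma_{\eta,M}=\{\operatorname{Im}z>M,\ \operatorname{Im}z>\eta|\operatorname{Re}z|\}$ whose image contains another such cone; the Voiculescu transform is $\phi_\mu(z)=F_\mu^{-1}(z)-z$ on that cone. A probability measure is freely $\tfrac12$-stable iff $\phi_\mu(z)=bz^{1/2}+c$ with $c\in\mathbb{R}$ and $\arg b\in[\pi,3\pi/2]$, and strictly freely $\tfrac12$-stable iff moreover $c=0$. *)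

From Stdlib Require Import Reals Lra.
Open Scope R_scope.

Record Cplx := mkC { Re : R ; Im : R }.

Definition Cadd (z w : Cplx) : Cplx := mkC (Re z + Re w) (Im z + Im w).
Definition Csub (z w : Cplx) : Cplx := mkC (Re z - Re w) (Im z - Im w).
Definition Cmul (z w : Cplx) : Cplx :=
  mkC (Re z * Re w - Im z * Im w) (Re z * Im w + Im z * Re w).
Definition RtoC (x : R) : Cplx := mkC x 0.
Definition Ci : Cplx := mkC 0 1.
Definition Cmod (z : Cplx) : R := sqrt (Re z ^ 2 + Im z ^ 2).

Definition Cexpi (t : R) : Cplx := mkC (cos t) (sin t).

Definition upper (z : Cplx) : Prop := 0 < Im z.

Definition off_pos_axis (w : Cplx) : Prop := ~ (Im w = 0 /\ 0 <= Re w).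

(** The branch of the argument with values in (0, 2pi) on C \ [0,oo)
    (defined totally; only meaningful off [0,oo)). *)
Definition arg1 (w : Cplx) : R :=
  if Rle_dec 0 (Im w) then acos (Re w / Cmod w)
  else 2 * PI - acos (Re w / Cmod w).

Definition log1 (w : Cplx) : Cplx := mkC (ln (Cmod w)) (arg1 w).

Definition Cexp (z : Cplx) : Cplx := mkC (exp (Re z) * cos (Im z)) (exp (Re z) * sin (Im z)).

Definition cpow (w : Cplx) (p : R) : Cplx := Cexp (Cmul (RtoC p) (log1 w)).

(** Reciprocal Cauchy transform of the monotone alpha-stable law a^alpha_s:
    F(z) = (z^alpha + (-1)^(alpha-1) s)^(1/alpha), with (-1)^(alpha-1) := e^{i(alpha-1)pi}. *)
Definition F_monotone_stable (alpha : R) (s : Cplx) (z : Cplx) : Cplx :=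
  cpow (Cadd (cpow z alpha) (Cmul (Cexpi ((alpha - 1) * PI)) s)) (1 / alpha).

Definition cone (eta M : R) (z : Cplx) : Prop :=
  M < Im z /\ eta * Rabs (Re z) < Im z.

(** phi is the Voiculescu transform of (the reciprocal Cauchy transform) F:
    F is univalent on some truncated cone Gamma_{eta,M}, its image contains
    another truncated cone Gamma_{eta',M'}, and on the latter
    phi(z) = F^{-1}(z) - z, F^{-1} being the inverse of F restricted to Gamma_{eta,M}. *)
Definition voiculescu_transform (F : Cplx -> Cplx) (phi : Cplx -> Cplx) : Prop :=
  exists eta M eta' M' : R,
    0 < eta /\ 0 < M /\ 0 < eta' /\ 0 < M' /\
    (forall z1 z2, cone eta M z1 -> cone eta M z2 -> F z1 = F z2 -> z1 = z2) /\
    (forall z, cone eta' M' z ->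
       exists w, cone eta M w /\ F w = z /\ phi z = Csub w z).

(** Freely 1/2-stable (via the characterization of its Voiculescu transform):
    phi(z) = b z^{1/2} + c with c real and arg b in [pi, 3pi/2]. *)
Definition freely_half_stable (F : Cplx -> Cplx) : Prop :=
  exists (b : Cplx) (c : R),
    b <> RtoC 0 /\ PI <= arg1 b <= 3 * PI / 2 /\
    voiculescu_transform F (fun z => Cadd (Cmul b (cpow z (1/2))) (RtoC c)).

Definition strictly_freely_half_stable (F : Cplx -> Cplx) : Prop :=
  exists (b : Cplx),
    b <> RtoC 0 /\ PI <= arg1 b <= 3 * PI / 2 /\
    voiculescu_transform F (fun z => Cadd (Cmul b (cpow z (1/2))) (RtoC 0)).

(** For [alpha = 1/2] the reciprocal Cauchy transform is a shifted square,
    [F(z) = (z^(1/2) + c)^2] with [c = -i s]; for [s = -R] or [s = iR] the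
    shift [c] is [iR] or [R], a nonzero point of the closed first quadrant.

    For a shift [c] in the
    first quadrant, [F] is then univalent on the upper half-plane and
    [(z^(1/2) - c)^2] is an explicit inverse on a truncated cone, so the
    Voiculescu transform is [(z^(1/2) - c)^2 - z = -2c z^(1/2) + c^2].
    Univalence also forces this formula on the imaginary axis for any
    transform, which rules out a vanishing constant term when [c <> 0].
    Finally [c^2] is real and [-2c] lies in the third quadrant, so the
    characterization of free 1/2-stability applies. *)

From Stdlib Require Import Reals Lra Psatz FunctionalExtensionality.
Open Scope R_scope.

Lemma Ceq (z w : Cplx) : Re z = Re w -> Im z = Im w -> z = w.
Proof. destruct z, w; simpl; intros; subst; reflexivity. Qed.

Lemma Cmod_sq (w : Cplx) : Cmod w * Cmod w = Re w ^ 2 + Im w ^ 2.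
Proof. unfold Cmod; apply sqrt_sqrt; nra. Qed.

Lemma Cmod_pos (w : Cplx) : 0 < Re w ^ 2 + Im w ^ 2 -> 0 < Cmod w.
Proof. intros; unfold Cmod; apply sqrt_lt_R0; auto. Qed.

Lemma cos_arg_bound (w : Cplx) :
  0 < Re w ^ 2 + Im w ^ 2 -> -1 <= Re w / Cmod w <= 1.
Proof.
  intros H. pose proof (Cmod_pos w H) as Hm. pose proof (Cmod_sq w) as Hs.
  assert ((Re w / Cmod w) ^ 2 <= 1); [|nra].
  replace ((Re w / Cmod w) ^ 2) with (Re w ^ 2 / (Cmod w * Cmod w)) by (field; lra).
  apply Rmult_le_reg_r with (Cmod w * Cmod w); [nra|].
  unfold Rdiv; rewrite Rmult_assoc, Rinv_l by nra. nra.
Qed.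

Lemma cos_arg_unit (w : Cplx) (e : R) :
  0 < Re w ^ 2 + Im w ^ 2 -> e * e = 1 -> Re w / Cmod w = e ->
  Re w = e * Cmod w /\ Im w = 0.
Proof.
  intros H He E. pose proof (Cmod_pos w H) as Hm. pose proof (Cmod_sq w) as Hs.
  assert (Ha : Re w = e * Cmod w) by (rewrite <- E; field; lra).
  split; [exact Ha|]. rewrite Ha in Hs. nra.
Qed.

Lemma acos_cos_arg_0 (w : Cplx) :
  0 < Re w ^ 2 + Im w ^ 2 -> acos (Re w / Cmod w) = 0 -> 0 < Re w /\ Im w = 0.
Proof.
  intros H E. pose proof (Cmod_pos w H).
  destruct (cos_arg_unit w 1 H ltac:(ring)) as [Ha Hb]; [|split; lra].
  rewrite <- (cos_acos (Re w / Cmod w)), E, cos_0 by (apply cos_arg_bound; exact H). reflexivity.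
Qed.

Lemma acos_cos_arg_PI (w : Cplx) :
  0 < Re w ^ 2 + Im w ^ 2 -> acos (Re w / Cmod w) = PI -> Im w = 0.
Proof.
  intros H E.
  destruct (cos_arg_unit w (-1) H ltac:(ring)) as [_ Hb]; [|exact Hb].
  rewrite <- (cos_acos (Re w / Cmod w)), E, cos_PI by (apply cos_arg_bound; exact H). reflexivity.
Qed.

Lemma Cexp_log1 (w : Cplx) : 0 < Re w ^ 2 + Im w ^ 2 -> Cexp (log1 w) = w.
Proof.
  intros H. pose proof (Cmod_pos w H) as Hm. pose proof (Cmod_sq w) as Hs.
  pose proof (cos_arg_bound w H) as Hx.
  set (m := Cmod w) in *. set (a := Re w) in *. set (b := Im w) in *.
  assert (Hsin : sqrt (1 - (a / m)²) = Rabs b / m).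
  { replace (1 - (a / m)²) with ((Rabs b / m) ^ 2).
    2:{ replace ((Rabs b / m) ^ 2) with (Rabs b ^ 2 / (m * m)) by (field; lra).
        rewrite pow2_abs. unfold Rsqr. field_simplify; try lra.
        replace (m ^ 2) with (m * m) by ring. rewrite Hs. field. nra. }
    apply sqrt_pow2. apply Rmult_le_pos; [apply Rabs_pos|left; apply Rinv_0_lt_compat; lra]. }
  assert (Hturn : 2 * PI - acos (a / m) = - acos (a / m) + 2 * INR 1 * PI) by (simpl; ring).
  unfold log1, Cexp, arg1; simpl. fold m a b. rewrite exp_ln by lra.
  destruct (Rle_dec 0 b); apply Ceq; simpl; fold a b.
  - rewrite cos_acos by lra. field; lra.
  - rewrite sin_acos, Hsin, Rabs_right by lra. field; lra.
  - rewrite Hturn, cos_period, cos_neg, cos_acos by lra. field; lra.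
  - rewrite Hturn, sin_period, sin_neg, sin_acos, Hsin, Rabs_left by lra. field; lra.
Qed.

Lemma off_pos_axis_nonzero (w : Cplx) : off_pos_axis w -> 0 < Re w ^ 2 + Im w ^ 2.
Proof.
  unfold off_pos_axis; intros Hw.
  destruct (Req_dec (Im w) 0) as [E|N]; [|nra].
  destruct (Rle_dec 0 (Re w)); [tauto|nra].
Qed.

Lemma upper_off_pos_axis (w : Cplx) : upper w -> off_pos_axis w.
Proof. unfold upper, off_pos_axis; lra. Qed.

Lemma upper_nonzero (w : Cplx) : upper w -> 0 < Re w ^ 2 + Im w ^ 2.
Proof. unfold upper; nra. Qed.

Lemma arg1_range (w : Cplx) : off_pos_axis w -> 0 < arg1 w < 2 * PI.
Proof.
  intros Hw. pose proof (off_pos_axis_nonzero w Hw) as H.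
  pose proof (acos_bound (Re w / Cmod w)). pose proof PI_RGT_0.
  assert (acos (Re w / Cmod w) <> 0).
  { intro E. apply Hw. destruct (acos_cos_arg_0 w H E). split; lra. }
  unfold arg1. destruct (Rle_dec 0 (Im w)); split; lra.
Qed.

Lemma arg1_upper (w : Cplx) : upper w -> 0 < arg1 w < PI.
Proof.
  intros Hw. pose proof (upper_nonzero w Hw) as H.
  pose proof (arg1_range w (upper_off_pos_axis w Hw)). unfold upper in Hw.
  pose proof (acos_bound (Re w / Cmod w)).
  assert (acos (Re w / Cmod w) <> PI).
  { intro E. pose proof (acos_cos_arg_PI w H E). lra. }
  unfold arg1 in *. destruct (Rle_dec 0 (Im w)); split; lra.
Qed.

Lemma Cexp_double (z : Cplx) : Cmul (Cexp z) (Cexp z) = Cexp (Cmul (RtoC 2) z).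
Proof.
  destruct z as [a b]; unfold Cexp, Cmul, RtoC; apply Ceq; simpl;
  replace (2 * a - 0 * b) with (a + a) by ring;
  replace (2 * b + 0 * a) with (2 * b) by ring;
  rewrite exp_plus, ?cos_2a, ?sin_2a; ring.
Qed.

Lemma cpow_2 (w : Cplx) : 0 < Re w ^ 2 + Im w ^ 2 -> cpow w 2 = Cmul w w.
Proof. intros H. unfold cpow. rewrite <- Cexp_double, Cexp_log1; auto. Qed.

(** The branch [w ^ (1/2)] of the square root, with argument in (0, pi). *)
Definition csqrt (w : Cplx) : Cplx := cpow w (1 / 2).

Lemma csqrt_sq (w : Cplx) : 0 < Re w ^ 2 + Im w ^ 2 -> Cmul (csqrt w) (csqrt w) = w.
Proof.
  intros H. unfold csqrt, cpow. rewrite Cexp_double.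
  rewrite <- (Cexp_log1 w H) at 2. f_equal.
  destruct (log1 w) as [a b]; unfold Cmul, RtoC; apply Ceq; simpl; field.
Qed.

Lemma csqrt_im_pos (w : Cplx) : off_pos_axis w -> 0 < Im (csqrt w).
Proof.
  intros Hw. pose proof (arg1_range w Hw).
  unfold csqrt, cpow, Cexp, Cmul, RtoC; simpl.
  apply Rmult_lt_0_compat; [apply exp_pos|]. apply sin_gt_0; lra.
Qed.

Lemma csqrt_re_pos (w : Cplx) : upper w -> 0 < Re (csqrt w).
Proof.
  intros Hw. pose proof (arg1_upper w Hw).
  unfold csqrt, cpow, Cexp, Cmul, RtoC; simpl.
  apply Rmult_lt_0_compat; [apply exp_pos|]. apply cos_gt_0; lra.
Qed.

(** Squaring is injective on the upper half-plane: if [u^2 = v^2] then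
    [(u - v)(u + v) = 0] with [u + v <> 0]. *)
Lemma square_inj_upper (u v : Cplx) : upper u -> upper v -> Cmul u u = Cmul v v -> u = v.
Proof.
  destruct u as [u1 u2], v as [v1 v2]; unfold upper, Cmul; simpl; intros Hu Hv E.
  injection E; intros E2 E1.
  set (d1 := u1 - v1). set (d2 := u2 - v2). set (e1 := u1 + v1). set (e2 := u2 + v2).
  assert (A : d1 * e1 - d2 * e2 = 0) by (unfold d1, d2, e1, e2; nra).
  assert (B : d1 * e2 + d2 * e1 = 0) by (unfold d1, d2, e1, e2; nra).
  assert (He : 0 < e2) by (unfold e2; lra).
  assert (H : d1 * (e1 * e1 + e2 * e2) = 0).
  { replace (d1 * (e1 * e1 + e2 * e2))
      with (e1 * (d1 * e1 - d2 * e2) + e2 * (d1 * e2 + d2 * e1)) by ring.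
    rewrite A, B; ring. }
  assert (D1 : d1 = 0) by (apply Rmult_integral in H; destruct H; nra).
  rewrite D1 in B. assert (d2 = 0) by nra.
  unfold d1, d2 in *. f_equal; lra.
Qed.

Lemma csqrt_of_square (u : Cplx) : upper u -> csqrt (Cmul u u) = u.
Proof.
  intros Hu. destruct u as [u1 u2]; unfold upper in Hu; simpl in Hu.
  assert (Hoff : off_pos_axis (Cmul (mkC u1 u2) (mkC u1 u2))).
  { unfold off_pos_axis, Cmul; simpl. intros [A B].
    assert (u1 = 0) by nra. subst. nra. }
  apply square_inj_upper; [apply csqrt_im_pos; exact Hoff | exact Hu |].
  apply csqrt_sq, off_pos_axis_nonzero, Hoff.
Qed.

(** For [alpha = 1/2] the reciprocal Cauchy transform is a shifted square:
    [F(z) = (z^(1/2) + c)^2] with [c = e^(-i pi/2) s = -i s]. *)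
Definition shifted_square (c z : Cplx) : Cplx := cpow (Cadd (csqrt z) c) 2.

Lemma F_monotone_half (s : Cplx) :
  F_monotone_stable (1 / 2) s = shifted_square (Cmul (mkC 0 (-1)) s).
Proof.
  apply functional_extensionality; intro z.
  unfold F_monotone_stable, shifted_square, csqrt.
  replace (1 / (1 / 2)) with 2 by field. replace ((1 / 2 - 1) * PI) with (- (PI / 2)) by field.
  unfold Cexpi. rewrite cos_neg, sin_neg, cos_PI2, sin_PI2. reflexivity.
Qed.

Definition shifted_square_voiculescu (c z : Cplx) : Cplx :=
  Cadd (Cmul (Cmul (RtoC (-2)) c) (csqrt z)) (Cmul c c).

Lemma csqrt_cone (M : R) (z : Cplx) : cone 2 M z ->
  0 < Re (csqrt z) /\ 0 < Im (csqrt z) /\ Re (csqrt z) < 2 * Im (csqrt z) /\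
  Im (csqrt z) < 2 * Re (csqrt z) /\ M < 2 * Re (csqrt z) * Im (csqrt z).
Proof.
  intros [HM Hcone].
  assert (Hz : upper z) by (unfold upper; pose proof (Rabs_pos (Re z)); lra).
  pose proof (csqrt_re_pos z Hz) as Ha.
  pose proof (csqrt_im_pos z (upper_off_pos_axis z Hz)) as Hb.
  pose proof (csqrt_sq z (upper_nonzero z Hz)) as Hsq.
  destruct (csqrt z) as [a b]; simpl in *.
  destruct z as [z1 z2]; unfold Cmul in Hsq; simpl in *. injection Hsq; intros <- <-.
  pose proof (Rle_abs (a * a - b * b)). pose proof (Rle_abs (- (a * a - b * b))).
  rewrite Rabs_Ropp in *. repeat split; nra.
Qed.

Definition shifted_square_inv (c z : Cplx) : Cplx :=
  Cmul (Csub (csqrt z) c) (Csub (csqrt z) c).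

Lemma shifted_square_inv_sub (c z : Cplx) :
  upper z -> Csub (shifted_square_inv c z) z = shifted_square_voiculescu c z.
Proof.
  intros Hz. unfold shifted_square_inv, shifted_square_voiculescu.
  rewrite <- (csqrt_sq z (upper_nonzero z Hz)) at 3.
  destruct (csqrt z), c; unfold Csub, Cadd, Cmul, RtoC; apply Ceq; simpl; ring.
Qed.

Lemma csqrt_imag_axis (t : R) : 0 < t -> csqrt (mkC 0 (2 * t * t)) = mkC t t.
Proof.
  intros Ht. replace (mkC 0 (2 * t * t)) with (Cmul (mkC t t) (mkC t t))
    by (unfold Cmul; apply Ceq; simpl; ring).
  apply csqrt_of_square. unfold upper; simpl; lra.
Qed.

Section ShiftedSquare.

Variable c : Cplx.
Hypothesis c_re : 0 <= Re c.
Hypothesis c_im : 0 <= Im c.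

(** On the upper half-plane, [csqrt z + c] is away from the cut, so the
    power [2] is an honest square. *)
Lemma shifted_square_upper (z : Cplx) :
  upper z -> shifted_square c z = Cmul (Cadd (csqrt z) c) (Cadd (csqrt z) c).
Proof.
  intros Hz. apply cpow_2, upper_nonzero.
  pose proof (csqrt_im_pos z (upper_off_pos_axis z Hz)).
  unfold upper, Cadd; cbn [Re Im]. lra.
Qed.

Lemma shifted_square_inj (z1 z2 : Cplx) :
  upper z1 -> upper z2 -> shifted_square c z1 = shifted_square c z2 -> z1 = z2.
Proof.
  intros H1 H2 E. rewrite !shifted_square_upper in E by assumption.
  assert (Hroot : csqrt z1 = csqrt z2).
  { pose proof (csqrt_im_pos z1 (upper_off_pos_axis z1 H1)).
    pose proof (csqrt_im_pos z2 (upper_off_pos_axis z2 H2)).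
    apply square_inj_upper in E; [| unfold upper, Cadd; cbn [Re Im]; lra ..].
    apply Ceq; [apply (f_equal Re) in E | apply (f_equal Im) in E];
      unfold Cadd in E; cbn [Re Im] in E; lra. }
  rewrite <- (csqrt_sq z1), <- (csqrt_sq z2), Hroot by (apply upper_nonzero; assumption).
  reflexivity.
Qed.

Lemma shifted_square_inv_spec (z : Cplx) :
  cone 2 (16 * (Re c + Im c) ^ 2 + 16) z ->
  cone (1 / 2) 1 (shifted_square_inv c z) /\ shifted_square c (shifted_square_inv c z) = z.
Proof.
  intros Hz.
  assert (Hzu : upper z) by (destruct Hz; unfold upper; nra).
  pose proof (csqrt_sq z (upper_nonzero z Hzu)) as Hsq.
  destruct (csqrt_cone _ z Hz) as (Ha & Hb & Hab & Hba & HM).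
  unfold shifted_square_inv. destruct (csqrt z) as [a b]; cbn [Re Im] in *.
  assert (Hp : 2 * (Re c + Im c) < a) by nra.
  assert (Hq : 2 * (Re c + Im c) < b) by nra.
  assert (Hu : upper (Csub (mkC a b) c)) by (unfold upper, Csub; simpl; lra).
  split.
  - unfold cone, Csub, Cmul; simpl.
    assert (Hv : 4 < (a - Re c) * (b - Im c)) by nra.
    split; [nra|].
    apply Rmult_lt_reg_l with 2; [lra|].
    replace (2 * (1 / 2 * Rabs ((a - Re c) * (a - Re c) - (b - Im c) * (b - Im c))))
      with (Rabs ((a - Re c) * (a - Re c) - (b - Im c) * (b - Im c))) by field.
    apply Rabs_def1; nra.
  - assert (Hu2 : upper (Cmul (Csub (mkC a b) c) (Csub (mkC a b) c))).
    { unfold upper, Csub, Cmul in *; simpl in *; nra. }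
    rewrite shifted_square_upper, csqrt_of_square by assumption.
    rewrite <- Hsq. unfold Cmul, Cadd, Csub; apply Ceq; simpl; ring.
Qed.

Lemma voiculescu_shifted_square (phi : Cplx -> Cplx) :
  (forall z, upper z -> phi z = shifted_square_voiculescu c z) ->
  voiculescu_transform (shifted_square c) phi.
Proof.
  intros Hphi.
  exists (1 / 2), 1, 2, (16 * (Re c + Im c) ^ 2 + 16).
  repeat split; try lra; try nra.
  - intros z1 z2 [H1 _] [H2 _]. apply shifted_square_inj; unfold upper; lra.
  - intros z Hz. destruct (shifted_square_inv_spec z Hz) as [Hcone Hinv].
    assert (Hzu : upper z) by (destruct Hz; unfold upper; nra).
    exists (shifted_square_inv c z). repeat split; try apply Hcone; auto.
    rewrite Hphi, shifted_square_inv_sub by exact Hzu. reflexivity.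
Qed.

(** Conversely, a Voiculescu transform of [shifted_square c] is forced to be
    [-2 c z^(1/2) + c^2] high enough on the imaginary axis, by univalence. *)
Lemma voiculescu_shifted_square_axis (phi : Cplx -> Cplx) :
  voiculescu_transform (shifted_square c) phi ->
  exists K, forall y, K < y -> phi (mkC 0 y) = shifted_square_voiculescu c (mkC 0 y).
Proof.
  intros (eta & M & eta' & M' & He & HM & He' & HM' & _ & Hsurj).
  exists (M' + 16 * (Re c + Im c) ^ 2 + 16). intros y Hy.
  assert (Hcone : forall e N, 0 <= N -> N < y -> cone e N (mkC 0 y)).
  { intros e N HN HNy. unfold cone; simpl. rewrite Rabs_R0, Rmult_0_r. lra. }
  destruct (Hsurj (mkC 0 y) (Hcone eta' M' ltac:(lra) ltac:(nra)))
    as (w & [Hw1 Hw2] & Fw & ->).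
  destruct (shifted_square_inv_spec (mkC 0 y) (Hcone 2 (16 * (Re c + Im c) ^ 2 + 16) ltac:(nra) ltac:(nra)))
    as [[Hinv _] Finv].
  assert (Hy0 : upper (mkC 0 y)) by (unfold upper; simpl; nra).
  rewrite <- shifted_square_inv_sub by exact Hy0. f_equal.
  apply shifted_square_inj; unfold upper; try lra. rewrite Fw, Finv. reflexivity.
Qed.

(** Evaluating at [z = 2 i t^2]
    and [z = 8 i t^2] (square roots [t(1+i)], [2t(1+i)]) shows [b = -2c] and
    then [c^2 = 0]. *)
Lemma shifted_square_not_strict (b : Cplx) : c <> RtoC 0 ->
  ~ voiculescu_transform (shifted_square c) (fun z => Cadd (Cmul b (csqrt z)) (RtoC 0)).
Proof.
  intros Hc Hv. destruct (voiculescu_shifted_square_axis _ Hv) as [K HK].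
  set (t := Rabs K + 1).
  assert (Ht : 0 < t) by (unfold t; pose proof (Rabs_pos K); lra).
  assert (HtK : K < 2 * t * t) by (unfold t in *; pose proof (Rle_abs K); nra).
  pose proof (HK (2 * t * t) HtK) as E1.
  pose proof (HK (2 * (2 * t) * (2 * t)) ltac:(nra)) as E2.
  unfold shifted_square_voiculescu in E1, E2.
  rewrite csqrt_imag_axis in E1, E2 by lra.
  apply Hc. destruct b as [b1 b2]; destruct c as [p q].
  unfold Cadd, Cmul, RtoC in E1, E2; cbn [Re Im] in E1, E2.
  injection E1; intros A2 A1. injection E2; intros B2 B1.
  assert (Hsq : p * p - q * q = 0 /\ p * q = 0) by (split; nra).
  assert (Hp : p = 0).
  { assert (p * p * (p * p) = (p * q) * (p * q)) by nra.
    assert (p * p = 0) by nra. nra. }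
  unfold RtoC; apply Ceq; simpl; nra.
Qed.

End ShiftedSquare.

Lemma arg1_third_quadrant (w : Cplx) :
  Re w <= 0 -> Im w <= 0 -> 0 < Re w ^ 2 + Im w ^ 2 -> PI <= arg1 w <= 3 * PI / 2.
Proof.
  intros Ha Hb H. pose proof (Cmod_pos w H) as Hm. pose proof (Cmod_sq w) as Hs.
  pose proof (cos_arg_bound w H) as Hx. pose proof PI_RGT_0.
  assert (Hr : Re w / Cmod w <= 0)
    by (assert (Re w / Cmod w * Cmod w = Re w) by (field; lra); nra).
  unfold arg1. destruct (Rle_dec 0 (Im w)).
  - assert (Hm' : Cmod w = - Re w).
    { assert (Hprod : (Cmod w + Re w) * (Cmod w - Re w) = 0) by (assert (Im w = 0) by lra; nra).
      apply Rmult_integral in Hprod as [|]; lra. }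
    assert (Hneg : Re w / Cmod w = -1) by (rewrite Hm'; field; lra).
    rewrite Hneg. replace (-1) with (- (1)) by ring. rewrite acos_opp, acos_1. lra.
  - assert (PI / 2 <= acos (Re w / Cmod w)); [|pose proof (acos_bound (Re w / Cmod w)); lra].
    destruct (Rle_or_lt (PI / 2) (acos (Re w / Cmod w))) as [|Hlt]; [assumption|].
    pose proof (acos_bound (Re w / Cmod w)).
    assert (0 < cos (acos (Re w / Cmod w))) by (apply cos_gt_0; lra).
    rewrite cos_acos in * by exact Hx. lra.
Qed.

Lemma freely_half_stable_shifted_square (c : Cplx) (k : R) :
  0 <= Re c -> 0 <= Im c -> c <> RtoC 0 -> Cmul c c = RtoC k ->
  freely_half_stable (shifted_square c).
Proof.
  intros Hre Him Hnz Hk.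
  assert (Hc2 : 0 < Re c ^ 2 + Im c ^ 2).
  { destruct (Req_dec (Re c) 0) as [E1|]; [|nra].
    destruct (Req_dec (Im c) 0) as [E2|]; [|nra].
    exfalso; apply Hnz; unfold RtoC; apply Ceq; simpl; assumption. }
  exists (Cmul (RtoC (-2)) c), k. split; [|split].
  - intro E. apply (f_equal Re) in E as E1. apply (f_equal Im) in E as E2.
    unfold Cmul, RtoC in E1, E2; simpl in E1, E2. nra.
  - apply arg1_third_quadrant; unfold Cmul, RtoC; simpl; nra.
  - apply voiculescu_shifted_square; [assumption .. |].
    intros z _. unfold shifted_square_voiculescu. rewrite Hk. reflexivity.
Qed.

Theorem mainTheorem5 (Rr : R) (s : Cplx) :
  0 < Rr ->
  (s = RtoC (- Rr) \/ s = mkC 0 Rr) ->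
  voiculescu_transform (F_monotone_stable (1/2) s)
    (fun z => Csub (Cmul (Cmul (RtoC 2) (Cmul Ci s)) (cpow z (1/2))) (Cmul s s))
  /\ freely_half_stable (F_monotone_stable (1/2) s)
  /\ ~ strictly_freely_half_stable (F_monotone_stable (1/2) s).
Proof.
  intros HR Hs. rewrite F_monotone_half.
  set (c := Cmul (mkC 0 (-1)) s).
  assert (Hc : c = mkC 0 Rr \/ c = mkC Rr 0)
    by (unfold c; destruct Hs as [-> | ->]; [left | right];
        unfold Cmul, RtoC; apply Ceq; simpl; ring).
  assert (Hre : 0 <= Re c) by (destruct Hc as [-> | ->]; simpl; lra).
  assert (Him : 0 <= Im c) by (destruct Hc as [-> | ->]; simpl; lra).
  assert (Hnz : c <> RtoC 0) by (destruct Hc as [-> | ->]; intro E; injection E; lra).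
  split; [|split].
  - apply voiculescu_shifted_square; [assumption .. |]. intros z _.
    unfold shifted_square_voiculescu, c, csqrt.
    destruct s, (cpow z (1/2)); unfold Csub, Cadd, Cmul, RtoC, Ci; apply Ceq; simpl; ring.
  - destruct Hc as [-> | ->].
    + apply freely_half_stable_shifted_square with (- (Rr * Rr)); simpl; try lra;
        [exact Hnz | unfold Cmul, RtoC; apply Ceq; simpl; ring].
    + apply freely_half_stable_shifted_square with (Rr * Rr); simpl; try lra;
        [exact Hnz | unfold Cmul, RtoC; apply Ceq; simpl; ring].
  - intros (b & _ & _ & Hv). exact (shifted_square_not_strict c Hre Him b Hnz Hv).
Qed.
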